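(* Let $(A,[\cdot,\cdot])$ be an Acaa-algebra over a field $\mathbb K$ of characteristic $0$, and for $X\in A$ let $\mathrm{ad}\,X\in\mathrm{End}(A)$ be $\mathrm{ad}\,X(Y)=[X,Y]$. Then for all $X,Y\in A$: (1) $\mathrm{ad}\,X\circ\mathrm{ad}\,Y+\mathrm{ad}\,Y\circ\mathrm{ad}\,X=0$; (2) $2\,\mathrm{ad}[X,Y]=-\mathrm{ad}\,X\circ\mathrm{ad}\,Y+\mathrm{ad}\,Y\circ\mathrm{ad}\,X=-(\mathrm{ad}\,X\circ\mathrm{ad}\,Y-\mathrm{ad}\,Y\circ\mathrm{ad}\,X)$.
   Context: An Acaa-algebra over a field $\mathbb K$ of characteristic $0$ is a $\mathbb K$-vector space $A$ with a bilinear product $[\cdot,\cdot]$ which is anticommutative, $[x,y]=-[y,x]$, and satisfies $[x_1,[x_2,x_3]]=[x_2,[x_3,x_1]]$ for all $x_1,x_2,x_3\in A$. *)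

From HB Require Import structures.
From mathcomp Require Import all_boot all_algebra.
Set Implicit Arguments. Unset Strict Implicit. Unset Printing Implicit Defensive.
Import GRing.Theory.
Local Open Scope ring_scope.

Definition acaa (K : fieldType) (A : lmodType K) (br : A -> A -> A) : Prop :=
  (forall x y, br x y = - br y x) /\
  (forall x1 x2 x3, br x1 (br x2 x3) = br x2 (br x3 x1)).

Definition ad (K : fieldType) (A : lmodType K) (br : A -> A -> A) (x : A) : A -> A :=
  fun y => br x y.

From HB Require Import structures.
From mathcomp Require Import all_boot all_algebra.
Import GRing.Theory.
Set Implicit Arguments.
Unset Strict Implicit.
Local Open Scope ring_scope.

Section AcaaAlgebra.

Variables (K : fieldType) (A : lmodType K) (br : {bilinear A -> A -> A}).
Hypothesis br_anti : forall x y, br x y = - br y x.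
Hypothesis br_cyc : forall x1 x2 x3, br x1 (br x2 x3) = br x2 (br x3 x1).

Lemma ad_anticomm x y z : ad br y (ad br x z) = - ad br x (ad br y z).
Proof. by rewrite /ad br_cyc (br_anti z y) linearNr. Qed.

Lemma ad_br x y z : ad br (br x y) z = - ad br x (ad br y z).
Proof. by rewrite /ad br_anti br_cyc. Qed.

End AcaaAlgebra.

Theorem mainTheorem7 (K : fieldType) (A : lmodType K)
  (br : {bilinear A -> A -> A}) :
  [pchar K] =i pred0 ->
  acaa br ->
  forall X Y : A,
    (forall Z : A, ad br X (ad br Y Z) + ad br Y (ad br X Z) = 0) /\
    (forall Z : A,
       2%:R *: ad br (br X Y) Z = - ad br X (ad br Y Z) + ad br Y (ad br X Z)) /\
    (forall Z : A,
       - ad br X (ad br Y Z) + ad br Y (ad br X Z)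
       = - (ad br X (ad br Y Z) - ad br Y (ad br X Z))).
Proof.
move=> _ [anti cyc] X Y; split; [|split] => Z.
- by rewrite (ad_anticomm anti cyc X Y) subrr.
- by rewrite (ad_anticomm anti cyc X Y) (ad_br anti cyc) scaler_nat mulr2n -opprD.
- by rewrite opprB addrC.
Qed.
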